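(* Let $A_1,\dots,A_n,B$ be finite formulae (type expressions with no occurrence of $\mu$). If for every $\mathbf{LA}$-frame $(\mathcal W,\rhd,R)$, every hereditary valuation $\xi$ and every $p\in\mathcal W$, $\models^\xi_p A_i$ for all $i$ implies $\models^\xi_p B$, then $\{A_1,\dots,A_n\}\vdash B$ is derivable in $\mathbf{LA}$.
   Context: Finite formulae are generated by $A::=X\mid A\to A\mid\bullet A$ over a countably infinite set of propositional (type) variables. The formal system $\mathbf{LA}$ derives judgments $\Gamma\vdash A$ ($\Gamma$ a finite set of finite formulae; $\bullet\Gamma=\{\bullet C\mid C\in\Gamma\}$) by the rules: (assump) $\Gamma\cup\{A\}\vdash A$; (nec) from $\Gamma_1\vdash A$ infer $\bullet\Gamma_1\cup\Gamma_2\vdash\bullet A$; (4) from $\Gamma\vdash\bullet A$ infer $\Gamma\vdash\bullet\bullet A$; ($\to$I) from $\Gamma\cup\{A\}\vdash B$ infer $\Gamma\vdash A\to B$; ($\to$E) from $\Gamma_1\vdash A\to B$ and $\Gamma_2\vdash A$ infer $\Gamma_1\cup\Gamma_2\vdash B$; (W) from $\Gamma\vdash\bullet(\bullet A\to A)$ infer $\Gamma\vdash\bullet A$; (approx) from $\Gamma\vdash A$ infer $\Gamma\vdash\bullet A$; (L) from $\Gamma\vdash\bullet A\to\bullet B$ infer $\Gamma\vdash\bullet(A\to B)$. Kripke semantics: an $\mathbf{LA}$-frame is a triple $(\mathcal W,\rhd,R)$ with $\mathcal W$ nonempty, $\rhd$ a binary relation with no infinite chain $p_0\rhd p_1\rhd\cdots$,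 $R$ reflexive and transitive, such that: $pRq\rhd r$ implies $p\rhd r$; $p\rhd q$ implies $pRq$; and whenever $p\rhd q\,R\,q'$ there is $r$ with $pRr\rhd q'$ such that $r\rhd s$ implies $q'Rs$ for every $s$. A valuation $\xi$ assigns to each variable a map $\mathcal W\to\{\mathbf t,\mathbf f\}$; it is hereditary if $pRq$ and $\xi(X)(p)=\mathbf t$ imply $\xi(X)(q)=\mathbf t$. Forcing for finite formulae: $\models^\xi_p X$ iff $\xi(X)(p)=\mathbf t$; $\models^\xi_p\bullet A$ iff $\models^\xi_q A$ for all $q$ with $p\rhd q$; $\models^\xi_p A\to B$ iff for all $q$ with $pRq$, $\models^\xi_q A$ implies $\models^\xi_q B$. *)

From Stdlib Require Import List.
Import ListNotations.

Inductive form : Type :=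
| Var : nat -> form
| Imp : form -> form -> form
| Bul : form -> form.

(* Contexts are finite sets, represented by lists; a context Delta "is" the
   union of given pieces when it has exactly the same members. *)
Definition same_set (D : list form) (G : list form) : Prop :=
  forall C, In C D <-> In C G.

Inductive LA : list form -> form -> Prop :=
| LA_assump : forall G A, In A G -> LA G A
| LA_nec : forall G1 G2 D A, LA G1 A ->
    same_set D (map Bul G1 ++ G2) -> LA D (Bul A)
| LA_4 : forall G A, LA G (Bul A) -> LA G (Bul (Bul A))
| LA_impI : forall G D A B, LA D B -> same_set D (A :: G) -> LA G (Imp A B)
| LA_impE : forall G1 G2 D A B, LA G1 (Imp A B) -> LA G2 A ->
    same_set D (G1 ++ G2) -> LA D B
| LA_W : forall G A, LA G (Bul (Imp (Bul A) A)) -> LA G (Bul A)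
| LA_approx : forall G A, LA G A -> LA G (Bul A)
| LA_L : forall G A B, LA G (Imp (Bul A) (Bul B)) -> LA G (Bul (Imp A B)).

Record LAframe (W : Type) (rhd R : W -> W -> Prop) : Prop := {
  fr_nonempty : exists w : W, True;
  fr_noinf : ~ (exists f : nat -> W, forall n, rhd (f n) (f (S n)));
  fr_refl : forall p, R p p;
  fr_trans : forall p q r, R p q -> R q r -> R p r;
  fr_Rrhd : forall p q r, R p q -> rhd q r -> rhd p r;
  fr_rhdR : forall p q, rhd p q -> R p q;
  fr_cond : forall p q q', rhd p q -> R q q' ->
      exists r, R p r /\ rhd r q' /\ (forall s, rhd r s -> R q' s)
}.

Definition hereditary (W : Type) (R : W -> W -> Prop) (xi : nat -> W -> bool) : Prop :=
  forall X p q, R p q -> xi X p = true -> xi X q = true.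

Fixpoint forces (W : Type) (rhd R : W -> W -> Prop) (xi : nat -> W -> bool)
  (p : W) (A : form) : Prop :=
  match A with
  | Var X => xi X p = true
  | Bul A' => forall q, rhd p q -> forces W rhd R xi q A'
  | Imp A1 A2 => forall q, R p q -> forces W rhd R xi q A1 -> forces W rhd R xi q A2
  end.

From Stdlib Require Import List Classical ClassicalDescription Lia PeanoNat.
Import ListNotations.

(* Completeness via a canonical model. Worlds are theories [G] (arbitrary sets
   of formulae, closed under finite derivability) equipped with a height [n];
   [R] is theory inclusion with non-increasing height, and [p ▷ q] means that
   [q] proves every [C] with [p ⊢ •C] and has strictly smaller height, so
   [▷]-chains are finite. Truth coincides with derivability for formulae whose
   boxed subformulae lie in a fixed finite list. For [•C]: if [G ⊬ •C], the
   height invariant provides a [▷]-successor [{x | G ⊢ •x} ∪ {•C}] which does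
   not prove [C]; otherwise it would prove [•C → C], so [G ⊢ •(•C → C)] by
   (nec) and [G ⊢ •C] by (W). The frame condition for [p ▷ q R q'] is met by
   the theory [p ∪ {•D | q' ⊢ D}], whose boxed consequences are provable in
   [q'] thanks to (L). *)

Lemma same_set_refl (D : list form) : same_set D D.
Proof. intro; tauto. Qed.

Lemma same_set_app_diag (G : list form) : same_set G (G ++ G).
Proof.
  intro C; split; intro HC; [apply in_or_app; auto|].
  apply in_app_or in HC as [HC|HC]; auto.
Qed.

Lemma LA_weaken G A : LA G A -> forall G', incl G G' -> LA G' A.
Proof.
  induction 1; intros G' Hincl.
  - apply LA_assump; auto.
  - apply LA_nec with (G1 := G1) (G2 := G'); [assumption|].
    intro C; split; intro HC; [apply in_or_app; auto|].
    apply in_app_or in HC as [HC|HC]; auto.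
    apply Hincl, H0, in_or_app; auto.
  - apply LA_4; auto.
  - apply LA_impI with (D := A :: G'); [|apply same_set_refl].
    apply IHLA; intros x Hx; apply H0 in Hx as [->|Hx]; [left|right]; auto.
  - apply LA_impE with (G1 := G') (G2 := G') (A := A); [| |apply same_set_app_diag].
    + apply IHLA1; intros x Hx; apply Hincl, H1, in_or_app; auto.
    + apply IHLA2; intros x Hx; apply Hincl, H1, in_or_app; auto.
  - apply LA_W; auto.
  - apply LA_approx; auto.
  - apply LA_L; auto.
Qed.

Lemma LA_mp G A B : LA G (Imp A B) -> LA G A -> LA G B.
Proof.
  intros HAB HA; apply LA_impE with (G1 := G) (G2 := G) (A := A); auto.
  apply same_set_app_diag.
Qed.

Lemma LA_deduct G A B : LA (A :: G) B -> LA G (Imp A B).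
Proof. intro H; apply LA_impI with (D := A :: G); [exact H | apply same_set_refl]. Qed.

Fixpoint imps (Ds : list form) (F : form) : form :=
  match Ds with [] => F | D :: Ds' => Imp D (imps Ds' F) end.

Lemma LA_deduct_list Ds : forall G F, LA (G ++ Ds) F -> LA G (imps Ds F).
Proof.
  induction Ds as [|D Ds IH]; intros G F H; simpl.
  - rewrite app_nil_r in H; exact H.
  - apply LA_deduct, IH; eapply LA_weaken; [exact H|].
    intros x Hx; apply in_app_or in Hx as [Hx|[->|Hx]].
    + right; apply in_or_app; auto.
    + left; reflexivity.
    + right; apply in_or_app; auto.
Qed.

Lemma LA_L_imps Ds : forall G C,
  LA G (imps (map Bul Ds) (Bul C)) -> LA G (Bul (imps Ds C)).
Proof.
  induction Ds as [|D Ds IH]; intros G C H; simpl in *; [exact H|].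
  apply LA_L, LA_deduct, IH, LA_mp with (Bul D).
  - eapply LA_weaken; [exact H|]; intros x Hx; right; exact Hx.
  - apply LA_assump; left; reflexivity.
Qed.

Definition Der (P : form -> Prop) (C : form) : Prop :=
  exists L, (forall x, In x L -> P x) /\ LA L C.

Definition subtheory (P Q : form -> Prop) : Prop := forall C, Der P C -> Der Q C.

Definition extend (P : form -> Prop) (A : form) : form -> Prop := fun x => P x \/ x = A.

Definition unbox (P : form -> Prop) : form -> Prop := fun x => Der P (Bul x).

Definition union_boxed (P Q : form -> Prop) : form -> Prop :=
  fun x => P x \/ exists D, x = Bul D /\ Der Q D.

Lemma Der_assump (P : form -> Prop) x : P x -> Der P x.
Proof.
  intro Hx; exists [x]; split; [intros y [->|[]]; exact Hx | apply LA_assump; left; auto].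
Qed.

Lemma Der_mono (P Q : form -> Prop) : (forall x, P x -> Q x) -> subtheory P Q.
Proof. intros HPQ C [L [HL HC]]; exists L; split; auto. Qed.

Lemma Der_mp P A B : Der P (Imp A B) -> Der P A -> Der P B.
Proof.
  intros [L1 [H1 D1]] [L2 [H2 D2]]; exists (L1 ++ L2); split.
  - intros x Hx; apply in_app_or in Hx as [Hx|Hx]; auto.
  - apply LA_impE with (G1 := L1) (G2 := L2) (A := A); auto; apply same_set_refl.
Qed.

Lemma Der_approx P A : Der P A -> Der P (Bul A).
Proof. intros [L [HL D]]; exists L; split; [exact HL | apply LA_approx, D]. Qed.

Lemma Der_W P A : Der P (Bul (Imp (Bul A) A)) -> Der P (Bul A).
Proof. intros [L [HL D]]; exists L; split; [exact HL | apply LA_W, D]. Qed.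

Lemma Der_imps_mp P Ds : forall F,
  Der P (imps Ds F) -> (forall D, In D Ds -> Der P D) -> Der P F.
Proof.
  induction Ds as [|D Ds IH]; intros F HF HDs; simpl in *; [exact HF|].
  apply IH; [apply Der_mp with D|]; auto.
Qed.

Lemma subtheory_of_Der (P Q : form -> Prop) :
  (forall x, P x -> Der Q x) -> subtheory P Q.
Proof.
  intros HPQ C [L [HL HC]]; revert C HC.
  induction L as [|A L IH]; intros C HC.
  - exists []; split; [intros x []|exact HC].
  - apply Der_mp with A; [|apply HPQ, HL; left; reflexivity].
    apply IH; [intros x Hx; apply HL; right; exact Hx|].
    apply LA_deduct, HC.
Qed.

Lemma split_list_or (P Q : form -> Prop) L : (forall x, In x L -> P x \/ Q x) ->
  exists L1 L2, (forall x, In x L1 -> P x) /\ (forall x, In x L2 -> Q x) /\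
    incl L (L1 ++ L2).
Proof.
  induction L as [|a L IH]; intro HL.
  - exists [], []; repeat split; intros x [].
  - destruct IH as [L1 [L2 [H1 [H2 Hincl]]]]; [intros x Hx; apply HL; right; exact Hx|].
    destruct (HL a (or_introl eq_refl)) as [Ha|Ha].
    + exists (a :: L1), L2; repeat split; auto.
      * intros x [<-|Hx]; auto.
      * intros x [<-|Hx]; [left; reflexivity | right; apply Hincl, Hx].
    + exists L1, (a :: L2); repeat split; auto.
      * intros x [<-|Hx]; auto.
      * intros x [<-|Hx]; apply in_or_app; [right; left; reflexivity|].
        apply Hincl, in_app_or in Hx as [Hx|Hx]; [left|right; right]; exact Hx.
Qed.

Lemma Der_deduct P A B : Der (extend P A) B -> Der P (Imp A B).
Proof.
  intros [L [HL HB]].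
  destruct (split_list_or P (fun x => x = A) L HL) as [L1 [L2 [H1 [H2 Hincl]]]].
  exists L1; split; [exact H1|].
  apply LA_deduct; eapply LA_weaken; [exact HB|].
  intros x Hx; apply Hincl, in_app_or in Hx as [Hx|Hx]; [right; exact Hx|].
  left; symmetry; apply H2, Hx.
Qed.

Lemma Der_unbox_nec P D : Der (unbox P) D -> Der P (Bul D).
Proof.
  intros [L [HL HD]].
  apply subtheory_of_Der with (P := fun y => In y (map Bul L)).
  - intros x Hx; apply in_map_iff in Hx as [y [<- Hy]]; apply HL, Hy.
  - exists (map Bul L); split; [auto|].
    apply LA_nec with (G1 := L) (G2 := []); [exact HD|].
    rewrite app_nil_r; apply same_set_refl.
Qed.

Lemma list_of_boxes (Q : form -> Prop) L :
  (forall x, In x L -> exists D, x = Bul D /\ Q D) ->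
  exists Ds, L = map Bul Ds /\ forall D, In D Ds -> Q D.
Proof.
  induction L as [|a L IH]; intro HL; [exists []; split; [reflexivity | intros D []]|].
  destruct (HL a (or_introl eq_refl)) as [D [-> HD]].
  destruct IH as [Ds [-> HDs]]; [intros x Hx; apply HL; right; exact Hx|].
  exists (D :: Ds); split; [reflexivity|]; intros D' [<-|HD']; auto.
Qed.

(* Rule (L) lets the boxes [•D], [Q ⊢ D], added to [P] be traded for the
   premises [D] of a nested implication proved under a box. *)
Lemma Der_union_boxed_unbox (P Q : form -> Prop) C :
  (forall E, Der P (Bul E) -> Der Q E) ->
  Der (union_boxed P Q) (Bul C) -> Der Q C.
Proof.
  intros HPQ [L [HL HC]].
  destruct (split_list_or _ _ L HL) as [L1 [L2 [H1 [H2 Hincl]]]].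
  destruct (list_of_boxes _ L2 H2) as [Ds [-> HDs]].
  apply Der_imps_mp with Ds; [|exact HDs].
  apply HPQ; exists L1; split; [exact H1|].
  apply LA_L_imps, LA_deduct_list; eapply LA_weaken; [exact HC | exact Hincl].
Qed.

Definition form_eq_dec : forall x y : form, {x = y} + {x <> y}.
Proof. decide equality; apply Nat.eq_dec. Defined.

Fixpoint boxed_subforms (C : form) : list form :=
  match C with
  | Var _ => []
  | Imp C1 C2 => boxed_subforms C1 ++ boxed_subforms C2
  | Bul C' => C' :: boxed_subforms C'
  end.

Section CanonicalModel.

Variable BA : list form.

(* The invariant that makes a world refuting [•A] have a [▷]-successor of
   smaller height refuting [A] (see [canon_box_complete]). *)
Fixpoint height_bound (n : nat) (G : form -> Prop) : Prop :=
  match n with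
  | 0 => forall A, In A BA -> Der G (Bul A)
  | S n' => forall A, In A BA -> ~ Der G (Bul A) ->
      height_bound n' (extend (unbox G) (Bul A))
  end.

Lemma subtheory_extend_unbox G G' A :
  subtheory G G' -> subtheory (extend (unbox G) A) (extend (unbox G') A).
Proof.
  intro HG; apply subtheory_of_Der; intros x [Hx| ->]; apply Der_assump; [left|right].
  - apply HG, Hx.
  - reflexivity.
Qed.

Lemma height_bound_mono n : forall G G',
  subtheory G G' -> height_bound n G -> height_bound n G'.
Proof.
  induction n as [|n IH]; simpl; intros G G' HG Hb A HA; [apply HG, Hb, HA|].
  intro HnA; apply IH with (extend (unbox G) (Bul A)).
  - apply subtheory_extend_unbox, HG.
  - apply Hb; [exact HA | intro HGA; apply HnA, HG, HGA].
Qed.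

(* [L] lists the formulae of [BA] whose box is still unproved; each step of
   the bound proves one more of them. *)
Lemma height_bound_pending n : forall L G, length L <= n ->
  (forall A, In A BA -> Der G (Bul A) \/ In A L) -> height_bound n G.
Proof.
  induction n as [|n IH]; intros L G Hlen HL; simpl.
  - intros A HA; destruct (HL A HA) as [H|H]; [exact H|].
    destruct L; simpl in Hlen; [destruct H | lia].
  - intros A HA HnA; apply IH with (remove form_eq_dec A L).
    + destruct (HL A HA) as [H|H]; [contradiction|].
      pose proof (remove_length_lt form_eq_dec L A H); lia.
    + intros A' HA'; destruct (HL A' HA') as [H|H].
      * left; apply Der_assump; left; apply Der_approx, H.
      * destruct (form_eq_dec A' A) as [->|Hne].
        -- left; apply Der_assump; right; reflexivity.
        -- right; apply in_in_remove; assumption.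
Qed.

Record world : Type := mk_world {
  th : form -> Prop;
  ht : nat;
  ht_bound : height_bound ht th
}.

Definition canon_R (w w' : world) : Prop := subtheory (th w) (th w') /\ ht w' <= ht w.

Definition canon_rhd (w w' : world) : Prop :=
  (forall C, Der (th w) (Bul C) -> Der (th w') C) /\ ht w' < ht w.

Definition canon_val (X : nat) (w : world) : bool :=
  if excluded_middle_informative (Der (th w) (Var X)) then true else false.

Lemma canon_rhd_no_chain : ~ exists f : nat -> world, forall n, canon_rhd (f n) (f (S n)).
Proof.
  intros [f Hf].
  assert (Hdesc : forall k, ht (f k) + k <= ht (f 0)).
  { induction k as [|k IH]; [lia|]; destruct (Hf k) as [_ Hk]; lia. }
  specialize (Hdesc (S (ht (f 0)))); lia.
Qed.

Lemma height_bound_union_boxed G (w : world) :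
  height_bound (S (ht w)) (union_boxed G (th w)).
Proof.
  intros A _ _; apply height_bound_mono with (th w); [|apply ht_bound].
  apply subtheory_of_Der; intros x Hx; apply Der_assump; left.
  apply Der_assump; right; exists x; split; [reflexivity | apply Der_assump, Hx].
Qed.

Lemma canon_cond p q q' : canon_rhd p q -> canon_R q q' ->
  exists r, canon_R p r /\ canon_rhd r q' /\ (forall s, canon_rhd r s -> canon_R q' s).
Proof.
  intros [Hpq Hpq_ht] [Hqq' Hqq'_ht].
  exists (mk_world _ _ (height_bound_union_boxed (th p) q')); split; [|split].
  - split; [apply Der_mono; intros x Hx; left; exact Hx | simpl; lia].
  - split; [|simpl; lia]; intros C; apply Der_union_boxed_unbox.
    intros E HE; apply Hqq', Hpq, HE.
  - intros s [Hrs Hrs_ht]; simpl in Hrs_ht; split; [|lia].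
    intros C HC; apply Hrs, Der_assump; right; exists C; auto.
Qed.

Lemma canonical_frame : LAframe world canon_rhd canon_R.
Proof.
  constructor.
  - assert (Hb : height_bound 0 (fun _ => True)) by (intros A _; apply Der_assump; exact I).
    exists (mk_world _ _ Hb); exact I.
  - exact canon_rhd_no_chain.
  - intro p; split; [intros C HC; exact HC | lia].
  - intros p q r [H1 H2] [H3 H4]; split; [intros C HC; apply H3, H1, HC | lia].
  - intros p q r [H1 H2] [H3 H4]; split; [intros C HC; apply H3, H1, HC | lia].
  - intros p q [H1 H2]; split; [intros C HC; apply H1, Der_approx, HC | lia].
  - exact canon_cond.
Qed.

Lemma canon_val_hereditary : hereditary world canon_R canon_val.
Proof.
  intros X p q [Hpq _]; unfold canon_val.
  destruct excluded_middle_informative as [HpX|HpX]; [|discriminate].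
  destruct excluded_middle_informative as [HqX|HqX]; [reflexivity|].
  intros _; exfalso; apply HqX, Hpq, HpX.
Qed.

Lemma canon_imp_complete (w : world) A B :
  (forall w', canon_R w w' -> Der (th w') A -> Der (th w') B) -> Der (th w) (Imp A B).
Proof.
  intro HAB.
  pose (Hb := height_bound_mono _ _ _
                (Der_mono _ (extend (th w) A) (fun x Hx => or_introl Hx)) (ht_bound w)).
  apply Der_deduct, (HAB (mk_world _ _ Hb)); simpl.
  - split; [apply Der_mono; intros x Hx; left; exact Hx | simpl; lia].
  - apply Der_assump; right; reflexivity.
Qed.

Lemma canon_box_complete (w : world) C : In C BA ->
  (forall w', canon_rhd w w' -> Der (th w') C) -> Der (th w) (Bul C).
Proof.
  intros HC Hsucc; apply NNPP; intro HnC.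
  destruct w as [G [|n] Hb]; simpl in *; [apply HnC, Hb, HC|].
  apply HnC, Der_W, Der_unbox_nec, Der_deduct.
  apply (Hsucc (mk_world _ _ (Hb C HC HnC))); split; [|simpl; lia].
  intros D HD; apply Der_assump; left; exact HD.
Qed.

Lemma canon_truth C : incl (boxed_subforms C) BA -> forall w : world,
  forces world canon_rhd canon_R canon_val w C <-> Der (th w) C.
Proof.
  induction C as [X|C1 IH1 C2 IH2|C IH]; intros Hincl w; simpl in *.
  - unfold canon_val; destruct excluded_middle_informative; split;
      (discriminate || tauto).
  - assert (Hincl1 : incl (boxed_subforms C1) BA)
      by (intros x Hx; apply Hincl, in_or_app; auto).
    assert (Hincl2 : incl (boxed_subforms C2) BA)
      by (intros x Hx; apply Hincl, in_or_app; auto).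
    split.
    + intro Hf; apply canon_imp_complete; intros w' Hww' H1.
      apply IH2, Hf, IH1; assumption.
    + intros HD w' [Hww' _] H1; apply IH2; [exact Hincl2|].
      apply Der_mp with C1; [apply Hww', HD | apply IH1; assumption].
  - assert (Hincl' : incl (boxed_subforms C) BA)
      by (intros x Hx; apply Hincl; right; exact Hx).
    split.
    + intro Hf; apply canon_box_complete; [apply Hincl; left; reflexivity|].
      intros w' Hww'; apply IH, Hf; assumption.
    + intros HD w' [Hww' _]; apply IH, Hww', HD; assumption.
Qed.

End CanonicalModel.

Theorem theorem10 (As : list form) (B : form) :
  (forall (W : Type) (rhd R : W -> W -> Prop), LAframe W rhd R ->
     forall xi : nat -> W -> bool, hereditary W R xi ->
     forall p : W, (forall A, In A As -> forces W rhd R xi p A) ->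
       forces W rhd R xi p B) ->
  LA As B.
Proof.
  intros Hsem.
  set (BA := boxed_subforms B ++ flat_map boxed_subforms As).
  assert (Hb : height_bound BA (length BA) (fun x => In x As))
    by (apply height_bound_pending with BA; auto).
  set (w0 := mk_world BA _ _ Hb).
  assert (HB : Der (th BA w0) B).
  { apply (canon_truth BA); [intros x Hx; apply in_or_app; left; exact Hx|].
    apply Hsem; [apply canonical_frame | apply canon_val_hereditary|].
    intros A HA; apply (canon_truth BA).
    - intros x Hx; apply in_or_app; right; apply in_flat_map; eauto.
    - apply Der_assump, HA. }
  destruct HB as [L [HL HLB]]; eapply LA_weaken; eauto.
Qed.
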